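(* Let $c=(c_k)_{k\ge1}$ be a sequence of complex numbers with $c_k\to0$ as $k\to\infty$. Then $$\|T_c\|\le\sum_{k=1}^\infty\sqrt{k(k+1)}\,|c_{k+2}-2c_{k+1}+c_k|.$$
   Context: For a complex sequence $c=(c_k)_{k\ge1}$, $T_c$ is the infinite matrix indexed by $j,k\ge1$ with entries $(T_c)_{jk}=c_k$ if $j=k$, $(T_c)_{jk}=c_k-c_{k-1}$ if $j<k$, and $(T_c)_{jk}=0$ if $j>k$. $\|T_c\|$ denotes its operator norm on $\ell^2$ if it acts boundedly, and $\|T_c\|=\infty$ otherwise. *)

From HB Require Import structures.
From mathcomp Require Import all_boot all_order all_algebra.
From mathcomp Require Import all_classical all_reals all_analysis.
From mathcomp Require Export complex.
Export Order.TTheory GRing.Theory Num.Theory numFieldNormedType.Exports.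

Set Implicit Arguments.
Unset Strict Implicit.
Unset Printing Implicit Defensive.

Local Open Scope ring_scope.

(* A sequence c = (c_k)_{k>=1} is modelled by [c : nat -> R[i]],
   c_k := c k for k >= 1 (the value c 0 is never used). *)

Definition Tc (R : realType) (c : nat -> R[i]) (j k : nat) : R[i] :=
  if j == k then c k
  else if (j < k)%N then c k - c k.-1
  else 0.

Definition l2norm (R : realType) (N : nat) (x : nat -> R[i]) : R :=
  Num.sqrt (\sum_(1 <= j < N.+1) ComplexField.Normc.normc (x j) ^+ 2).

(* action of T_c on a vector supported on 1..N; the result is again
   supported on 1..N since T_c is upper triangular *)
Definition Tc_apply (R : realType) (c : nat -> R[i]) (N : nat)
  (x : nat -> R[i]) : nat -> R[i] :=
  fun j => \sum_(1 <= k < N.+1) Tc c j k * x k.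

(* This equals the
   operator norm when T_c acts boundedly, and is +oo otherwise. *)
Definition Tc_opnorm (R : realType) (c : nat -> R[i]) : \bar R :=
  ereal_sup [set r : \bar R | exists (N : nat) (x : nat -> R[i]),
     l2norm N x != 0 /\ r = ((l2norm N (Tc_apply c N x)) / l2norm N x)%:E]%classic.

From HB Require Import structures.
From mathcomp Require Import all_boot all_order all_algebra.
From mathcomp Require Import all_classical all_reals all_analysis.
From mathcomp Require Import complex.
From mathcomp Require Import ring zify.
Import Order.TTheory GRing.Theory Num.Theory numFieldNormedType.Exports.
Set Implicit Arguments.
Unset Strict Implicit.
Unset Printing Implicit Defensive.

Local Open Scope classical_set_scope.
Local Open Scope ring_scope.

(* Expanding c by the discrete Taylor formula at K+1,
     c_k = c_{K+1} + (c_{K+1} - c_{K+2}) phi_K(k) + sum_{m<=K} D2c_m phi_m(k)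
   with the ramps phi_m(k) = (m+1-k)_+, linearity of c |-> T_c and the triangle
   inequality reduce the bound to the operators T_{phi_m}.  By summation by parts,
   T_{phi_m} x is expressed through the tail means w_j of x, and a Hardy-type
   identity for sum |x_j|^2 in terms of w gives ||T_{phi_m}|| <= sqrt(m(m+1)).
   The boundary term |c_{K+1}| tends to 0; the term (K+1)|c_{K+1} - c_{K+2}| need
   not, so it is first traded, by telescoping the second differences up to a far
   index M, for (K+1)|c_{M+1} - c_M| plus a tail of the series, and M is sent to
   infinity before K. *)

Lemma cauchy_schwarz (R : realDomainType) (I : Type) (r : seq I) (a b : I -> R) :
  (\sum_(i <- r) a i * b i) ^+ 2 <=
  (\sum_(i <- r) a i ^+ 2) * (\sum_(i <- r) b i ^+ 2).
Proof.
set P := \sum_(i <- r) _; set A := \sum_(i <- r) _; set B := \sum_(i <- r) _.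
have lagrange : \sum_(i <- r) \sum_(j <- r) (a i * b j - a j * b i) ^+ 2
    = 2 * (A * B - P ^+ 2).
  have AB : A * B = \sum_(i <- r) \sum_(j <- r) a i ^+ 2 * b j ^+ 2.
    by rewrite big_distrl; apply: eq_bigr => i _; rewrite big_distrr.
  have P2 : P ^+ 2 = \sum_(i <- r) \sum_(j <- r) (a i * b i) * (a j * b j).
    by rewrite expr2 big_distrl; apply: eq_bigr => i _; rewrite big_distrr.
  have BA : A * B = \sum_(i <- r) \sum_(j <- r) a j ^+ 2 * b i ^+ 2.
    by rewrite AB exchange_big.
  transitivity (A * B + A * B - 2 * P ^+ 2); last by ring.
  rewrite {1}AB BA P2 -big_split /= mulr_sumr -sumrB; apply: eq_bigr => i _.
  rewrite -big_split /= mulr_sumr -sumrB; apply: eq_bigr => j _; ring.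
have : 0 <= 2 * (A * B - P ^+ 2).
  by rewrite -lagrange; do 2 (apply: sumr_ge0 => ? _); apply: sqr_ge0.
by rewrite pmulr_rge0 // subr_ge0.
Qed.

Lemma big_nat_widen0 (V : nmodType) (F : nat -> V) a b b' : (b <= b')%N ->
  (forall k, (b <= k < b')%N -> F k = 0) ->
  \sum_(a <= k < b') F k = \sum_(a <= k < b) F k.
Proof.
move=> bb' F0; have [ab|ba] := leqP a b.
  rewrite (big_cat_nat ab bb') /= [X in _ + X]big1_seq ?addr0 // => k.
  by rewrite mem_index_iota => /andP[_ /F0].
rewrite [RHS]big_geq ?(ltnW ba) // big1_seq // => k.
by rewrite mem_index_iota => /andP[_ /andP[ak kb']]; apply: F0; lia.
Qed.

Lemma sum_nat_le_support (R : numDomainType) (F : nat -> R) a b n :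
  (forall k, 0 <= F k) -> (forall k, (b <= k)%N -> F k = 0) ->
  \sum_(a <= k < n) F k <= \sum_(a <= k < b) F k.
Proof.
move=> F_ge0 F0; have [nb|bn] := leqP n b.
  have [an|na] := leqP a n; last by rewrite big_geq ?(ltnW na) // sumr_ge0.
  by rewrite (big_cat_nat an nb) /= lerDl sumr_ge0.
by rewrite (@big_nat_widen0 _ _ _ _ _ (ltnW bn)) // => k /andP[/F0].
Qed.

Lemma telescope_sumr_succ (V : zmodType) (f : nat -> V) a b : (a <= b)%N ->
  \sum_(a <= k < b) (f k - f k.+1) = f a - f b.
Proof.
move=> ab; rewrite -opprB -(telescope_sumr _ ab) -sumrN.
by apply: eq_bigr => k _; rewrite opprB.
Qed.

Section Normc.
Variable R : realType.
Local Open Scope complex_scope.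
Local Notation normc := (@ComplexField.Normc.normc R).

Lemma normc_ge0 (z : R[i]) : 0 <= normc z.
Proof. by case: z => a b /=; rewrite sqrtr_ge0. Qed.

Lemma normc_sum (I : Type) (r : seq I) (F : I -> R[i]) :
  normc (\sum_(i <- r) F i) <= \sum_(i <- r) normc (F i).
Proof.
elim: r => [|a r IH]; first by rewrite !big_nil ComplexField.Normc.normc0.
by rewrite !big_cons (le_trans (le_normcD _ _)) // lerD2l.
Qed.

Lemma normcB_le (a b : R[i]) : normc (a - b) <= normc a + normc b.
Proof. by rewrite -(normcN b) le_normcD. Qed.

Lemma normc_natmul (n : nat) (z : R[i]) : normc (n%:R * z) = n%:R * normc z.
Proof.
by rewrite ComplexField.Normc.normcM normcMn ComplexField.Normc.normc1.
Qed.

Lemma normc_sqr_affine (q : R) (a b : R[i]) :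
  normc ((q + 1)%:C * a - q%:C * b) ^+ 2 =
  (q + 1) * normc a ^+ 2 - q * normc b ^+ 2 + q * (q + 1) * normc (a - b) ^+ 2.
Proof.
have sqr z : normc z ^+ 2 = complex.Re z ^+ 2 + complex.Im z ^+ 2.
  by case: z => x y /=; rewrite sqr_sqrtr // addr_ge0 // sqr_ge0.
by rewrite !sqr; case: a => a1 a2; case: b => b1 b2 /=; ring.
Qed.

End Normc.

Section L2norm.
Variable R : realType.
Local Notation normc := (@ComplexField.Normc.normc R).
Implicit Types (N : nat) (f g : nat -> R[i]).

Lemma l2norm_ge0 N f : 0 <= l2norm N f.
Proof. exact: sqrtr_ge0. Qed.

Lemma eq_l2norm N f g : (forall j, (1 <= j <= N)%N -> f j = g j) ->
  l2norm N f = l2norm N g.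
Proof.
move=> fg; congr Num.sqrt; apply: eq_big_nat => j /andP[j1 jN].
by rewrite fg // j1 -ltnS.
Qed.

Lemma l2normZ N (a : R[i]) f :
  l2norm N (fun j => a * f j) = normc a * l2norm N f.
Proof.
rewrite /l2norm -[normc a]ger0_norm ?normc_ge0 // -sqrtr_sqr -sqrtrM ?sqr_ge0 //.
congr Num.sqrt; rewrite mulr_sumr; apply: eq_bigr => j _.
by rewrite ComplexField.Normc.normcM exprMn.
Qed.

Lemma l2normD N f g : l2norm N (fun j => f j + g j) <= l2norm N f + l2norm N g.
Proof.
rewrite /l2norm.
set A := \sum_(1 <= j < N.+1) normc (f j) ^+ 2.
set B := \sum_(1 <= j < N.+1) normc (g j) ^+ 2.
have A_ge0 : 0 <= A by apply: sumr_ge0 => j _; apply: sqr_ge0.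
have B_ge0 : 0 <= B by apply: sumr_ge0 => j _; apply: sqr_ge0.
set P := \sum_(1 <= j < N.+1) normc (f j) * normc (g j).
have P_le : P <= Num.sqrt A * Num.sqrt B.
  rewrite -sqrtrM // -[P]ger0_norm -?sqrtr_sqr ?ler_sqrt ?mulr_ge0 //.
    exact: cauchy_schwarz.
  by apply: sumr_ge0 => j _; rewrite mulr_ge0 ?normc_ge0.
have sum_le : \sum_(1 <= j < N.+1) normc (f j + g j) ^+ 2 <= A + B + 2 * P.
  rewrite /A /B /P mulr_sumr -!big_split /=; apply: ler_sum => j _.
  apply: le_trans (_ : _ <= (normc (f j) + normc (g j)) ^+ 2) _.
    by rewrite ler_pXn2r ?nnegrE ?addr_ge0 ?normc_ge0 ?le_normcD.
  by rewrite le_eqVlt; apply/orP; left; apply/eqP; ring.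
rewrite -[_ + _]ger0_norm ?addr_ge0 ?sqrtr_ge0 // -sqrtr_sqr ler_sqrt ?sqr_ge0 //.
apply: (le_trans sum_le).
by rewrite sqrrD !sqr_sqrtr // addrAC lerD2r lerD2l -[X in _ <= X]mulr_natl ler_pM2l.
Qed.

Lemma l2norm_sum N (I : Type) (r : seq I) (F : I -> nat -> R[i]) :
  l2norm N (fun j => \sum_(i <- r) F i j) <= \sum_(i <- r) l2norm N (F i).
Proof.
elim: r => [|a r IH].
  rewrite big_nil /l2norm big1 ?sqrtr0 // => j _.
  by rewrite big_nil ComplexField.Normc.normc0 expr0n.
rewrite big_cons; under eq_fun do rewrite big_cons.
by apply: le_trans (l2normD _ _ _) _; rewrite lerD2l.
Qed.

End L2norm.

Definition ramp (R : realType) (m k : nat) : R[i] := (m.+1 - k)%:R.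

Section RampHardy.
Variable R : realType.
Local Open Scope complex_scope.
Local Notation normc := (@ComplexField.Normc.normc R).
Variables (m : nat) (z : nat -> R[i]).

(* [w j] is the mean of [z j], ..., [z m.+1] (and [0] past [m.+1]). *)
Let t j := \sum_(j <= k < m.+2) z k.
Let w j := t j / (m.+2 - j)%:R.

Lemma tail_sumS j : (j <= m.+1)%N -> t j = z j + t j.+1.
Proof. by move=> jm; rewrite /t big_ltn. Qed.

Lemma tail_sum_avg j : t j = (m.+2 - j)%:R * w j.
Proof.
have [jm|mj] := leqP j m.+1; first by rewrite /w mulrC divfK // pnatr_eq0; lia.
by rewrite /t big_geq ?(ltnW mj) // (_ : m.+2 - j = 0)%N ?mul0r //; lia.
Qed.

Lemma ramp_abel j : (j <= m.+1)%N ->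
  \sum_(j <= k < m.+1) ramp R m k * (z k - z k.+1) =
  (m.+1 - j)%:R * t j - (m.+2 - j)%:R * t j.+1.
Proof.
move=> jm; have [i ji] : exists i, (j + i = m.+1)%N by exists (m.+1 - j)%N; lia.
elim: i j jm ji => [|i IH] j jm ji.
  rewrite addn0 in ji; subst j.
  by rewrite big_geq // subnn mul0r subSnn mul1r /t (big_geq (leqnn m.+2)) subrr.
rewrite big_ltn; last by lia.
rewrite IH; [|lia|lia].
rewrite (tail_sumS jm) (tail_sumS (_ : j.+1 <= m.+1)%N); last by lia.
rewrite /ramp !subSS (subSn (_ : j <= m)%N); last by lia.
rewrite (subSn jm) (subSn (_ : j <= m)%N); last by lia.
rewrite -!natr1; ring.
Qed.

Lemma ramp_abel_avg j : (j <= m.+1)%N ->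
  \sum_(j <= k < m.+1) ramp R m k * (z k - z k.+1) =
  ((m.+1 - j) * (m.+2 - j))%:R * (w j - w j.+1).
Proof. by move=> jm; rewrite ramp_abel // !tail_sum_avg subSS natrM; ring. Qed.

Lemma normc_sqr_avg j : (j <= m.+1)%N ->
  normc (z j) ^+ 2 =
    (m.+2 - j)%:R * normc (w j) ^+ 2 - (m.+1 - j)%:R * normc (w j.+1) ^+ 2
    + ((m.+1 - j) * (m.+2 - j))%:R * normc (w j - w j.+1) ^+ 2.
Proof.
move=> jm; have e : (m.+2 - j = (m.+1 - j).+1)%N by lia.
have -> : z j = ((m.+1 - j)%:R + 1)%:C * w j - ((m.+1 - j)%:R)%:C * w j.+1.
  have natC n : (n%:R : R[i]) = (n%:R)%:C by rewrite rmorph_nat.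
  apply: (addrI (t j.+1)); rewrite addrC -tail_sumS // !tail_sum_avg subSS e.
  by rewrite -natr1 rmorphD rmorph1 !natC; ring.
by rewrite normc_sqr_affine e natrM -natr1.
Qed.

Lemma sum_normc_sqr_avg :
  \sum_(1 <= j < m.+2) normc (z j) ^+ 2 =
  m.+1%:R * normc (w 1) ^+ 2 +
  \sum_(1 <= j < m.+2) ((m.+1 - j) * (m.+2 - j))%:R * normc (w j - w j.+1) ^+ 2.
Proof.
pose v j := (m.+2 - j)%:R * normc (w j) ^+ 2.
rewrite (eq_big_nat _ _ (F2 := fun j => (v j - v j.+1) +
  ((m.+1 - j) * (m.+2 - j))%:R * normc (w j - w j.+1) ^+ 2)); last first.
  by move=> j /andP[_ jm]; rewrite normc_sqr_avg // /v subSS.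
by rewrite big_split /= telescope_sumr_succ // /v subnn mul0r subr0 subn1.
Qed.

Lemma hardy_ramp :
  \sum_(1 <= j < m.+1)
      normc (\sum_(j <= k < m.+1) ramp R m k * (z k - z k.+1)) ^+ 2 <=
  (m * m.+1)%:R * \sum_(1 <= j < m.+2) normc (z j) ^+ 2.
Proof.
rewrite sum_normc_sqr_avg mulrDr ler_wpDl ?mulr_ge0 ?exprn_ge0 ?normc_ge0 //.
rewrite [X in _ <= _ * X]big_nat_recr //= subnn mul0n mul0r addr0 mulr_sumr.
apply: ler_sum_nat => j /andP[j1 jm].
rewrite ramp_abel_avg; last by lia.
rewrite normc_natmul exprMn expr2 -mulrA ler_wpM2r ?mulr_ge0 ?exprn_ge0 ?normc_ge0 //.
by rewrite ler_nat leq_mul //; lia.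
Qed.

End RampHardy.

Section Toeplitz.
Variable R : realType.
Local Notation normc := (@ComplexField.Normc.normc R).
Implicit Types (c f g : nat -> R[i]) (x : nat -> R[i]) (N j : nat).

Definition trunc N x k : R[i] := if (k <= N)%N then x k else 0.

Lemma trunc_id N x k : (k <= N)%N -> trunc N x k = x k.
Proof. by rewrite /trunc => ->. Qed.

Lemma trunc_out N x k : (N < k)%N -> trunc N x k = 0.
Proof. by rewrite /trunc ltnNge => /negbTE ->. Qed.

Lemma Tc_apply_row c N x j : (1 <= j <= N)%N ->
  Tc_apply c N x j = c j * x j + \sum_(j.+1 <= k < N.+1) (c k - c k.-1) * x k.
Proof.
case/andP=> j1 jN; rewrite /Tc_apply (big_cat_nat j1 (_ : j <= N.+1)%N) //=; last by lia.
rewrite big_nat_cond big1 ?add0r => [|k /andP[/andP[_ kj] _]]; last first.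
  by rewrite /Tc gtn_eqF // ltnNge (ltnW kj) mul0r.
rewrite big_ltn ?ltnS // /Tc eqxx; congr (_ + _).
by apply: eq_big_nat => k /andP[jk _]; rewrite ltn_eqF // jk.
Qed.

Lemma Tc_apply_sbp c N x j : (1 <= j <= N)%N ->
  Tc_apply c N x j = \sum_(j <= k < N.+1) c k * (trunc N x k - trunc N x k.+1).
Proof.
move=> /[dup] /andP[_ jN] jr; rewrite Tc_apply_row //.
have shift : \sum_(j <= k < N.+1) c k * trunc N x k.+1 =
    \sum_(j.+1 <= k < N.+1) c k.-1 * x k.
  transitivity (\sum_(j.+1 <= k < N.+2) c k.-1 * trunc N x k); first by rewrite big_add1.
  rewrite big_nat_recr ?ltnS //= /trunc ltnn mulr0 addr0.
  by apply: eq_big_nat => k /andP[_]; rewrite ltnS => ->.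
under [RHS]eq_bigr do rewrite mulrBr.
rewrite sumrB shift [in RHS]big_ltn ?ltnS // trunc_id // -addrA -sumrB.
congr (_ + _); apply: eq_big_nat => k /andP[_]; rewrite ltnS => kN.
by rewrite trunc_id // mulrBl.
Qed.

Lemma Tc_apply_congr c c' N x j : (forall k, (1 <= k <= N)%N -> c k = c' k) ->
  (1 <= j <= N)%N -> Tc_apply c N x j = Tc_apply c' N x j.
Proof.
move=> cc' jN; rewrite !Tc_apply_sbp //; apply: eq_big_nat => k /andP[jk kN].
by rewrite cc' //; lia.
Qed.

Lemma Tc_applyD f g N x j : (1 <= j <= N)%N ->
  Tc_apply (fun k => f k + g k) N x j = Tc_apply f N x j + Tc_apply g N x j.
Proof.
by move=> jN; rewrite !Tc_apply_sbp // -big_split; apply: eq_bigr => k _; rewrite mulrDl.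
Qed.

Lemma Tc_applyZ (a : R[i]) f N x j : (1 <= j <= N)%N ->
  Tc_apply (fun k => a * f k) N x j = a * Tc_apply f N x j.
Proof.
by move=> jN; rewrite !Tc_apply_sbp // mulr_sumr; apply: eq_bigr => k _; rewrite mulrA.
Qed.

Lemma Tc_apply_sum (I : Type) (r : seq I) (F : I -> nat -> R[i]) N x j :
  (1 <= j <= N)%N ->
  Tc_apply (fun k => \sum_(i <- r) F i k) N x j = \sum_(i <- r) Tc_apply (F i) N x j.
Proof.
move=> jN; rewrite Tc_apply_sbp //.
rewrite (eq_bigr (fun k => \sum_(i <- r) F i k * (trunc N x k - trunc N x k.+1))).
  by rewrite exchange_big; apply: eq_bigr => i _; rewrite Tc_apply_sbp.
by move=> k _; rewrite big_distrl.
Qed.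

Lemma Tc_apply_one N x j : (1 <= j <= N)%N -> Tc_apply (fun _ => 1) N x j = x j.
Proof.
move=> /[dup] /andP[j1 jN] jr; rewrite Tc_apply_sbp //.
under eq_bigr do rewrite mul1r.
rewrite telescope_sumr_succ; last exact: ltnW.
by rewrite trunc_id // trunc_out // subr0.
Qed.

Lemma Tc_apply_ramp m N x j : (1 <= j <= N)%N ->
  Tc_apply (ramp R m) N x j =
  \sum_(j <= k < m.+1) ramp R m k * (trunc N x k - trunc N x k.+1).
Proof.
move=> jN; rewrite Tc_apply_sbp //.
rewrite -(@big_nat_widen0 _ _ _ _ (maxn N m).+1); last 2 first.
- by rewrite ltnS leq_maxl.
- by move=> k /andP[Nk _]; rewrite !trunc_out ?subrr ?mulr0 //; lia.
rewrite -[RHS](@big_nat_widen0 _ _ _ _ (maxn N m).+1) //; first by rewrite ltnS leq_maxr.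
by move=> k /andP[mk _]; rewrite /ramp (_ : m.+1 - k = 0)%N ?mul0r //; lia.
Qed.

Lemma l2norm_Tc_ramp m N x :
  l2norm N (Tc_apply (ramp R m) N x) <= Num.sqrt (m * m.+1)%:R * l2norm N x.
Proof.
pose Y j := \sum_(j <= k < m.+1) ramp R m k * (trunc N x k - trunc N x k.+1).
have TY_le : \sum_(1 <= j < N.+1) normc (Tc_apply (ramp R m) N x j) ^+ 2 <=
    \sum_(1 <= j < m.+1) normc (Y j) ^+ 2.
  rewrite (eq_big_nat _ _ (F2 := fun j => normc (Y j) ^+ 2)); last first.
    by move=> j /andP[j1 jN]; rewrite Tc_apply_ramp // j1 -ltnS.
  apply: sum_nat_le_support => [j|j mj]; first by rewrite exprn_ge0 ?normc_ge0.
  by rewrite /Y big_geq // ComplexField.Normc.normc0 expr0n.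
have trunc_le : \sum_(1 <= j < m.+2) normc (trunc N x j) ^+ 2 <=
    \sum_(1 <= j < N.+1) normc (x j) ^+ 2.
  apply: le_trans (sum_nat_le_support _ (b := N.+1) _ _ _) _ => [j|j Nj|].
  - by rewrite exprn_ge0 ?normc_ge0.
  - by rewrite trunc_out // ComplexField.Normc.normc0 expr0n.
  by apply: ler_sum_nat => j /andP[_]; rewrite ltnS => /trunc_id ->.
rewrite /l2norm -sqrtrM ?ler0n // ler_sqrt ?mulr_ge0 ?sumr_ge0 // => [|j _].
  apply: le_trans TY_le (le_trans (hardy_ramp _ _) _).
  by rewrite ler_wpM2l.
by rewrite exprn_ge0 ?normc_ge0.
Qed.

End Toeplitz.

Definition diff2 (R : realType) (c : nat -> R[i]) (m : nat) : R[i] :=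
  c m.+2 - 2 * c m.+1 + c m.

Section Bounds.
Variable R : realType.
Local Notation normc := (@ComplexField.Normc.normc R).
Local Notation rho m := (Num.sqrt (m * m.+1)%:R : R).
Implicit Types (c : nat -> R[i]) (x : nat -> R[i]).

Lemma ramp_expansion c K k : (1 <= k <= K.+1)%N ->
  c k = c K.+1 + (c K.+1 - c K.+2) * ramp R K k +
        \sum_(1 <= m < K.+1) diff2 c m * ramp R m k.
Proof.
elim: K k => [|K IH] k kK.
  by rewrite (_ : k = 1)%N ?big_geq /ramp ?subnn ?mulr0 ?addr0 //; lia.
have [kK1|->] : (k <= K.+1)%N \/ k = K.+2 by lia.
  rewrite {1}(IH k) ?kK1 ?andbT; last by case/andP: kK.
  rewrite [in RHS]big_nat_recr //= /ramp /diff2 (subSn kK1) -natr1; ring.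
rewrite /ramp subnn mulr0 addr0 big_nat_cond big1 ?addr0 // => m.
by rewrite andbT => /andP[_ mK]; rewrite (_ : m.+1 - K.+2 = 0)%N ?mulr0 //; lia.
Qed.

Lemma Tc_apply_expansion c N x K j : (N <= K.+1)%N -> (1 <= j <= N)%N ->
  Tc_apply c N x j = c K.+1 * x j + (c K.+1 - c K.+2) * Tc_apply (ramp R K) N x j
    + \sum_(1 <= m < K.+1) diff2 c m * Tc_apply (ramp R m) N x j.
Proof.
move=> NK jN.
rewrite (@Tc_apply_congr _ _ (fun k => c K.+1 * 1 + (c K.+1 - c K.+2) * ramp R K k
    + \sum_(1 <= m < K.+1) diff2 c m * ramp R m k)); last 2 first.
- by move=> k kN; rewrite mulr1 (@ramp_expansion c K k) //; lia.
- exact: jN.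
rewrite !Tc_applyD // !Tc_applyZ // Tc_apply_one // Tc_apply_sum //.
by congr (_ + _); apply: eq_bigr => m _; rewrite Tc_applyZ.
Qed.

Lemma l2norm_Tc_le_expansion c N x K : (N <= K.+1)%N ->
  l2norm N (Tc_apply c N x) <=
  (normc (c K.+1) + normc (c K.+1 - c K.+2) * rho K +
   \sum_(1 <= m < K.+1) rho m * normc (diff2 c m)) * l2norm N x.
Proof.
move=> NK; rewrite (eq_l2norm (fun j => @Tc_apply_expansion c N x K j NK)).
apply: le_trans (l2normD _ _ _) _; rewrite !mulrDl big_distrl /=.
apply: lerD; first apply: le_trans (l2normD _ _ _) _.
- rewrite !l2normZ -mulrA; apply: lerD => //.
  by rewrite ler_wpM2l ?normc_ge0 ?l2norm_Tc_ramp.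
- apply: le_trans (l2norm_sum _ _ _) _; apply: ler_sum => m _.
  by rewrite l2normZ [leRHS]mulrAC [leRHS]mulrC ler_wpM2l ?normc_ge0 ?l2norm_Tc_ramp.
Qed.

Lemma sqrt_mulnS_ge m : (m%:R : R) <= rho m.
Proof.
rewrite -[m%:R]ger0_norm // -sqrtr_sqr ler_sqrt // -natrX ler_nat.
by rewrite leq_mul.
Qed.

Lemma sqrt_mulnS_le m : rho m <= m.+1%:R.
Proof.
rewrite -[m.+1%:R]ger0_norm // -sqrtr_sqr ler_sqrt ?sqr_ge0 // -natrX ler_nat.
by rewrite leq_mul.
Qed.

Lemma first_diff_le c K M : (K.+1 <= M)%N ->
  K.+1%:R * normc (c K.+1 - c K.+2) <=
  K.+1%:R * normc (c M.+1 - c M) +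
  \sum_(K.+1 <= m < M) rho m * normc (diff2 c m).
Proof.
move=> KM.
have -> : c K.+1 - c K.+2 =
    - (c M.+1 - c M) + \sum_(K.+1 <= m < M) diff2 c m.
  rewrite (eq_bigr (fun m => (c m.+2 - c m.+1) - (c m.+1 - c m))).
    by rewrite telescope_sumr //; ring.
  by move=> m _; rewrite /diff2; ring.
apply: le_trans (ler_wpM2l (ler0n _ _) (le_normcD _ _)) _.
rewrite normcN mulrDr lerD2l.
apply: le_trans (ler_wpM2l (ler0n _ _) (normc_sum _ _)) _.
rewrite mulr_sumr; apply: ler_sum_nat => m /andP[Km _].
rewrite ler_wpM2r ?normc_ge0 //.
by apply: le_trans (sqrt_mulnS_ge m); rewrite ler_nat.
Qed.

Lemma l2norm_Tc_le c N x K M : (N <= K.+1)%N -> (K.+1 <= M)%N ->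
  l2norm N (Tc_apply c N x) <=
  (normc (c K.+1) + K.+1%:R * normc (c M.+1 - c M) +
   \sum_(1 <= m < M) rho m * normc (diff2 c m)) * l2norm N x.
Proof.
move=> NK KM; apply: le_trans (l2norm_Tc_le_expansion c x NK) _.
rewrite ler_wpM2r ?l2norm_ge0 // (big_cat_nat _ KM) //= -!addrA lerD2l.
rewrite [leRHS]addrCA addrC lerD2l mulrC.
apply: le_trans (first_diff_le c KM).
by rewrite ler_wpM2r ?normc_ge0 ?sqrt_mulnS_le.
Qed.

Lemma boundary_le_of_cvg0 c : (fun k => normc (c k)) @ \oo --> (0 : R) ->
  forall N (e : R), 0 < e -> exists K M, [/\ (N <= K.+1)%N, (K.+1 <= M)%N &
    normc (c K.+1) + K.+1%:R * normc (c M.+1 - c M) <= e].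
Proof.
move=> /cvgrPdist_lt c0 N e e0.
have small d : 0 < d -> exists K, forall n, (K <= n)%N -> normc (c n) < d.
  move=> d0; have [K _ cK] := c0 d d0; exists K => n Kn.
  by have := cK n Kn; rewrite sub0r normrN ger0_norm ?normc_ge0.
have [K0 cK0] := small (e / 2) (divr_gt0 e0 (ltr0n _ 2)).
pose K := maxn N K0.
have K1_gt0 : 0 < K.+1%:R :> R by rewrite ltr0n.
pose d := e / 2 / K.+1%:R / 2.
have [M0 cM0] : exists M0, forall n, (M0 <= n)%N -> normc (c n) < d.
  by apply: small; rewrite !divr_gt0.
pose M := maxn K.+1 M0.
exists K, M; split; [lia|lia|].
have cK : normc (c K.+1) <= e / 2 by rewrite ltW // cK0 //; lia.
have cM : K.+1%:R * normc (c M.+1 - c M) <= e / 2.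
  apply: le_trans (ler_wpM2l (ler0n _ _) (normcB_le _ _)) _.
  have -> : e / 2 = K.+1%:R * (d + d) by rewrite /d; field; rewrite gt_eqF.
  by rewrite ler_wpM2l // lerD // ltW // cM0 //; lia.
by rewrite [e]splitr lerD.
Qed.

End Bounds.

Theorem theorem2 (R : realType) (c : nat -> R[i]) :
  (fun k => ComplexField.Normc.normc (c k)) @ \oo --> (0 : R) ->
  (Tc_opnorm c <=
    \sum_(1 <= k <oo)
      ((Num.sqrt ((k * k.+1)%:R : R)) * ComplexField.Normc.normc (c k.+2 - 2 * c k.+1 + c k))%:E)%E.
Proof.
move=> c0; apply: ge_ereal_sup => _ [N [x [x0 ->]]].
have x_gt0 : 0 < l2norm N x by rewrite lt_def x0 l2norm_ge0.
apply/lee_addgt0Pr => e e0.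
have [K [M [NK KM small]]] := boundary_le_of_cvg0 c0 N e0.
pose S := \sum_(1 <= m < M)
  Num.sqrt (m * m.+1)%:R * ComplexField.Normc.normc (diff2 c m).
apply: le_trans (_ : _ <= (S + e)%:E)%E _.
  rewrite lee_fin ler_pdivrMr // addrC.
  apply: le_trans (l2norm_Tc_le c x NK KM) _.
  by rewrite ler_wpM2r ?l2norm_ge0 // lerD2r.
rewrite EFinD; apply: leeD2r; rewrite -sumEFin; apply: nneseries_lim_ge => m _ _.
by rewrite lee_fin mulr_ge0 ?sqrtr_ge0 ?normc_ge0.
Qed.
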